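(* Suppose $\rho^w$ is one-step coherently decomposable and satisfies the bounded conditional market risk assumption. Then, for an American option (with or without the buyer's commitment to an exercise strategy), it is optimal for the writer to terminate the hedging strategy at the exact moment the option is exercised, i.e. there is a minimal-risk hedging policy with $\hat\xi^{i}_k=0$ for all $i\le k$, so that the position $\xi_k\mathbf{1}\{\tau>k\}+\sum_{i=0}^k\hat\xi^i_k\mathbf{1}\{\tau=i\}$ is zero whenever $\tau\le k$. The same applies to the buyer when $\rho^b$ is one-step coherently decomposable and satisfies the bounded conditional market risk assumption.
   Context: Discrete-time setting: filtered probability space $(\Omega,\mathcal{F},(\mathcal{F}_t),\mathbb{P})$, zero interest rate, risky asset with $S_k:=S_{t_k}$ at trading dates $t_0<\dots<t_{K-1}<t_K=T$, $\Delta S_{k+1}=S_{k+1}-S_k$, adapted auxiliary process $Y_k$; variables in $\mathcal{L}_p$ for some $p\in[1,\infty]$. Exercise times are stopping times $\tau:\Omega\to\{0,\dots,K\}$; payoff $F(S_\tau,Y_\tau)=\sum_k\mathbf{1}\{\tau=k\}F(S_k,Y_k)$. Self-financing strategies: $X^\tau_0=p_0$, $X^\tau_{k+1}=X^\tau_k+(\xi_k\mathbf{1}\{\tau>k\}+\sum_{i=0}^k\hat\xi^i_k\mathbf{1}\{\tau=i\})\Delta S_{k+1}$ with $\xi_k,\hat\xi^i_k$ $\mathcal{F}_{t_k}$-measurable ($\hat\xi^i_k$ is the position held at $k$ after exercise at $i$). The writer minimizes $\rho^w(F(S_\tau,Y_\tau)-X^\tau_K)$ over strategies (for a committed $\tau$,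 or against the worst $\tau$ without commitment); the buyer minimizes $\rho^b(-F(S_\tau,Y_\tau)-X^\tau_K)$ over strategies and $\tau$. A conditional risk mapping $\rho_k:\mathcal{L}_p(\Omega,\mathcal{F}_{t_{k+1}},\mathbb{P})\to\mathcal{L}_p(\Omega,\mathcal{F}_{t_k},\mathbb{P})$ is conditionally convex, monotone and translation invariant; $\rho$ is one-step coherently decomposable if $\rho=\rho_0\circ\cdots\circ\rho_{K-1}$ for such mappings which are moreover conditionally scale invariant ($\rho_k(\alpha X)=\alpha\rho_k(X)$ for $\alpha\ge0$). Bounded conditional market risk: with $\rho_{k,K}:=\rho_k\circ\cdots\circ\rho_{K-1}$, for each $k$, $0\ge\inf_{\xi_k,\dots,\xi_{K-1}}\rho_{k,K}(-\sum_{\ell=k}^{K-1}\xi_\ell\Delta S_{\ell+1})>-\infty$ a.s. (and $=0$ when conditionally scale invariant). *)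

From HB Require Import structures.
From mathcomp Require Import all_boot all_order all_algebra.
From mathcomp Require Import all_classical all_reals all_analysis.
Set Implicit Arguments. Unset Strict Implicit. Unset Printing Implicit Defensive.
Import Order.TTheory GRing.Theory Num.Theory.
Import numFieldNormedType.Exports.
Local Open Scope classical_set_scope.
Local Open Scope ring_scope.

Section Defs.
Context {d : measure_display} {T : measurableType d} {R : realType}.
Variable P : probability T R.

Definition is_filtration (F : nat -> set (set T)) : Prop :=
  forall k, [/\ sigma_algebra setT (F k), F k `<=` measurable & F k `<=` F k.+1].

Definition meas_in (G : set (set T)) (f : T -> R) : Prop :=
  @measurable_fun _ _ (g_sigma_algebraType G) R setT f.

Definition Lp_in (p : \bar R) (G : set (set T)) (f : T -> R) : Prop :=
  meas_in G f /\ ('N[P]_p[EFin \o f] < +oo)%E.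

Definition ae_le (f g : T -> R) : Prop := {ae P, forall w, f w <= g w}.
Definition ae_eq (f g : T -> R) : Prop := {ae P, forall w, f w = g w}.

Definition coherent_cond_risk_map (p : \bar R) (F : nat -> set (set T)) (k : nat)
    (r : (T -> R) -> (T -> R)) : Prop :=
  [/\ (forall X, Lp_in p (F k.+1) X -> Lp_in p (F k) (r X)),
      (forall X Y, Lp_in p (F k.+1) X -> Lp_in p (F k.+1) Y ->
         ae_le X Y -> ae_le (r X) (r Y)),
      (forall X m, Lp_in p (F k.+1) X -> Lp_in p (F k) m ->
         ae_eq (r (X \+ m)) (r X \+ m)),
      (forall X Y (l : T -> R), Lp_in p (F k.+1) X -> Lp_in p (F k.+1) Y ->
         meas_in (F k) l -> (forall w, 0 <= l w <= 1) ->
         ae_le (r (fun w => l w * X w + (1 - l w) * Y w))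
               (fun w => l w * r X w + (1 - l w) * r Y w)) &
      (forall X (a : T -> R), Lp_in p (F k.+1) X ->
         meas_in (F k) a -> (forall w, 0 <= a w) -> (exists M : R, forall w, a w <= M) ->
         ae_eq (r (a \* X)) (a \* r X))].

Definition rho_comp (rk : nat -> (T -> R) -> (T -> R)) (j K : nat) (X : T -> R) : T -> R :=
  foldr (fun k acc => rk k acc) X (iota j (K - j)).

Definition gains (S : nat -> T -> R) (xi : nat -> T -> R) (j K : nat) : T -> R :=
  fun w => \sum_(j <= l < K) xi l w * (S l.+1 w - S l w).

Definition admissible_from (p : \bar R) (F : nat -> set (set T)) (S : nat -> T -> R)
    (j K : nat) (xi : nat -> T -> R) : Prop :=
  forall l, (j <= l < K)%N ->
    meas_in (F l) (xi l) /\ Lp_in p (F l.+1) (fun w => xi l w * (S l.+1 w - S l w)).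

(** bounded conditional market risk: for each k, ess inf over strategies of
    rho_{k,K}(- sum_{l>=k} xi_l Delta S_{l+1}) is > -oo a.s., i.e. admits an
    a.s. real lower bound *)
Definition bounded_cond_market_risk (p : \bar R) (F : nat -> set (set T))
    (S : nat -> T -> R) (K : nat) (rk : nat -> (T -> R) -> (T -> R)) : Prop :=
  forall k, (k < K)%N -> exists L : T -> R,
    forall xi, admissible_from p F S k K xi ->
      ae_le L (rho_comp rk k K (fun w => - gains S xi k K w)).

Definition one_step_coherent_decomposition (p : \bar R) (F : nat -> set (set T))
    (K : nat) (rho : (T -> R) -> (T -> R)) (rk : nat -> (T -> R) -> (T -> R)) : Prop :=
  (forall k, (k < K)%N -> coherent_cond_risk_map p F k (rk k)) /\
  (forall X, Lp_in p (F K) X -> ae_eq (rho X) (rho_comp rk 0 K X)).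

Definition good_risk_measure (p : \bar R) (F : nat -> set (set T)) (S : nat -> T -> R)
    (K : nat) (rho : (T -> R) -> (T -> R)) : Prop :=
  exists rk, one_step_coherent_decomposition p F K rho rk /\
             bounded_cond_market_risk p F S K rk.

Definition stopping_time (F : nat -> set (set T)) (K : nat) (tau : T -> nat) : Prop :=
  (forall w, (tau w <= K)%N) /\ (forall k, (k <= K)%N -> F k [set w | tau w = k]).

(** self-financing strategy (xi, xih): xi_k used before exercise, xih i k the
    position held at k after exercise at i (i <= k); both F_k-measurable *)
Definition admissible_strategy (p : \bar R) (F : nat -> set (set T)) (S : nat -> T -> R)
    (K : nat) (xi : nat -> T -> R) (xih : nat -> nat -> T -> R) : Prop :=
  admissible_from p F S 0 K xi /\
  (forall i, (i < K)%N -> admissible_from p F S i K (xih i)).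

(** the position held over (t_k, t_{k+1}] *)
Definition position (tau : T -> nat) (xi : nat -> T -> R) (xih : nat -> nat -> T -> R)
    (k : nat) : T -> R :=
  fun w => xi k w * (k < tau w)%N%:R + \sum_(0 <= i < k.+1) xih i k w * (tau w == i)%:R.

Definition wealth (S : nat -> T -> R) (K : nat) (p0 : R) (tau : T -> nat)
    (xi : nat -> T -> R) (xih : nat -> nat -> T -> R) : T -> R :=
  fun w => p0 + gains S (position tau xi xih) 0 K w.

Definition payoff_at {U : Type} (Fp : R -> U -> R) (S : nat -> T -> R) (Y : nat -> T -> U)
    (K : nat) (tau : T -> nat) : T -> R :=
  fun w => \sum_(0 <= k < K.+1) (tau w == k)%:R * Fp (S k w) (Y k w).

Definition no_post_exercise : nat -> nat -> T -> R := fun _ _ _ => 0.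

End Defs.

From Pilot Require Import Defs.
From mathcomp Require Import all_boot all_order all_algebra.
From mathcomp Require Import all_classical all_reals all_analysis.
From mathcomp Require Import ess_sup_inf measurable_realfun.
From mathcomp Require Import zify ring.
Set Implicit Arguments. Unset Strict Implicit. Unset Printing Implicit Defensive.
Import Order.TTheory GRing.Theory Num.Theory.
Local Open Scope classical_set_scope.
Local Open Scope ring_scope.

(* Let [hedged_loss m] be the writer's loss when the post-exercise hedge [xih i] is kept only
   after exercise dates [i < m]: [m = 0] stops hedging at exercise, [m = K] is the given
   strategy.  Off the [F_m]-event [{tau = m}] the losses for [m] and [m + 1] coincide; on it
   they are an [F_m]-measurable [U] and [G + U], where [G] is the loss of a hedge started at
   [m].  Scale invariance makes [rho_{m,K}] local on [F_m]-events and, with bounded market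
   risk, forces [rho_{m,K}(G) >= 0]; translation invariance then gives
   [rho_{m,K}(hedged_loss m) <= rho_{m,K}(hedged_loss (m + 1))], and monotonicity of
   [rho_{0,m}] chains these inequalities from [m = 0] to [m = K]. *)

Local Notation measurable_in G A := (@measurable _ (g_sigma_algebraType G) A).

Section LpSpace.
Context (d : measure_display) (T : measurableType d) (R : realType).
Variables (P : probability T R) (p : \bar R).
Hypothesis p_ge1 : (1 <= p)%E.

Lemma Lnorm_le (f g : T -> R) : measurable_fun setT f -> measurable_fun setT g ->
  (forall w, `|f w| <= `|g w|) -> ('N[P]_p[EFin \o f] <= 'N[P]_p[EFin \o g])%E.
Proof.
move=> mf mg fg; move: p_ge1; case: p => [r r1|_|//]; rewrite unlock /Lnorm.
- have r0 : (0 <= r)%R by rewrite lee_fin in r1; exact: le_trans r1.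
  have mpow (h : T -> R) : measurable_fun setT h ->
      measurable_fun setT (fun w => (`|(EFin \o h) w| `^ r)%E).
    move=> mh; have -> : (fun w => (`|(EFin \o h) w| `^ r)%E) =
                         EFin \o (fun w => `|h w| `^ r) by apply/funext.
    apply/measurable_EFinP.
    by apply: (measurableT_comp (measurable_powR r)); exact: measurableT_comp.
  apply: gt0_ler_poweR; first by rewrite invr_ge0.
  + by rewrite in_itv /= leey andbT integral_ge0// => w _; exact: poweR_ge0.
  + by rewrite in_itv /= leey andbT integral_ge0// => w _; exact: poweR_ge0.
  apply: ge0_le_integral => //; [by move=> w _; exact: poweR_ge0|exact: mpow|exact: mpow|].
  by move=> w _ /=; rewrite lee_fin; apply: ge0_ler_powR.
- case: ifPn => // _; apply: le_ess_sup.
  by apply: nearW => w /=; rewrite lee_fin.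
Qed.

Variable G : set (set T).
Hypothesis G_measurable : G `<=` measurable.

Local Notation Lp := (Lp_in P p G).

Lemma meas_in_measurable (f : T -> R) : meas_in G f -> measurable_fun setT f.
Proof.
move=> mf _ A mA; have := mf measurableT A mA.
by apply: smallest_sub => //; exact: sigma_algebra_measurable.
Qed.

Lemma indicator_meas_in (b : T -> bool) :
  measurable_in G [set w | b w] -> meas_in G (fun w => (b w)%:R : R).
Proof.
move=> mb; have -> : (fun w => (b w)%:R : R) = \1_[set w | b w].
  apply/funext => w; rewrite indicE.
  by case: (boolP (b w)) => bw; [rewrite mem_set|rewrite memNset //= (negbTE bw)].
exact: measurable_indic.
Qed.

Lemma Lp_in_le (f g : T -> R) : meas_in G f -> Lp g ->
  (forall w, `|f w| <= `|g w|) -> Lp f.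
Proof.
move=> mf [mg Ng] fg; split => //; apply: le_lt_trans Ng.
by apply: Lnorm_le => //; exact: meas_in_measurable.
Qed.

Lemma Lp_inD (f g : T -> R) : Lp f -> Lp g -> Lp (fun w => f w + g w).
Proof.
move=> [mf Nf] [mg Ng]; split; first exact: measurable_funD.
apply: le_lt_trans (eminkowski P (meas_in_measurable mf) (meas_in_measurable mg) p_ge1) _.
by rewrite lte_add_pinfty.
Qed.

Lemma Lp_inN (f : T -> R) : Lp f -> Lp (fun w => - f w).
Proof.
move=> Lf; apply: (Lp_in_le _ Lf); first exact: measurable_funN Lf.1.
by move=> w; rewrite normrN.
Qed.

Lemma Lp_inB (f g : T -> R) : Lp f -> Lp g -> Lp (fun w => f w - g w).
Proof. by move=> Lf /Lp_inN; exact: Lp_inD. Qed.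

Lemma Lp_in_cst (c : R) : Lp (cst c).
Proof.
split; first exact: measurable_cst.
move: p_ge1; case: p => [r _|_|//].
- by move: (Lfun_cst P c r); rewrite inE => /andP[_]; rewrite inE.
- rewrite unlock /Lnorm; case: ifPn => // _.
  rewrite (@ess_sup_ae_cst _ _ _ _ _ `|c|%:E) ?ltry//; last exact: nearW.
  by have := probability_setT P; move=> /= ->; rewrite lte01.
Qed.

Lemma Lp_in_sum (s : seq nat) (f : nat -> T -> R) :
  (forall i, i \in s -> Lp (f i)) -> Lp (fun w => \sum_(i <- s) f i w).
Proof.
elim: s => [|i s IH] Ls.
  under eq_fun do rewrite big_nil; exact: Lp_in_cst.
under eq_fun do rewrite big_cons.
apply: Lp_inD; first by apply: Ls; rewrite inE eqxx.
by apply: IH => j js; apply: Ls; rewrite inE js orbT.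
Qed.

Lemma Lp_in_indicatorM (b : T -> bool) (f : T -> R) :
  measurable_in G [set w | b w] -> Lp f ->
  Lp (fun w => (b w)%:R * f w).
Proof.
move=> mb Lf; apply: (Lp_in_le _ Lf).
  exact: measurable_funM (indicator_meas_in mb) Lf.1.
by move=> w; case: (b w); rewrite ?mul1r ?mul0r ?normr0.
Qed.

(* [|a f| <= (truncn M + 1) |f|], and [Lp] is closed under finite sums. *)
Lemma Lp_in_bddM (a f : T -> R) (M : R) :
  meas_in G a -> (forall w, `|a w| <= M) -> Lp f -> Lp (fun w => a w * f w).
Proof.
move=> ma aM Lf.
have Lsum := @Lp_in_sum (index_iota 0 (Num.truncn M).+1) (fun _ => f) (fun _ _ => Lf).
apply: (Lp_in_le _ Lsum); first exact: measurable_funM ma Lf.1.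
move=> w; rewrite sumr_const_nat subn0 normrMn normrM -mulr_natl.
by apply: ler_wpM2r => //; apply: le_trans (aM w) _; exact/ltW/truncnS_gt.
Qed.

End LpSpace.

Lemma meas_in_sub d (T : measurableType d) (R : realType) (G G' : set (set T)) (f : T -> R) :
  G `<=` G' -> meas_in G f -> meas_in G' f.
Proof.
move=> GG' mf _ A mA; have := mf measurableT A mA.
exact: sub_sigma_algebra2.
Qed.

Lemma Lp_in_sub d (T : measurableType d) (R : realType) (P : probability T R) p
    (G G' : set (set T)) (f : T -> R) :
  G `<=` G' -> Lp_in P p G f -> Lp_in P p G' f.
Proof. by move=> GG' [mf Nf]; split => //; exact: meas_in_sub mf. Qed.

Section AlmostEverywhere.
Context (d : measure_display) (T : measurableType d) (R : realType).
Variable P : probability T R.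

Lemma ae_eq_le (X Y : T -> R) : Defs.ae_eq P X Y -> ae_le P X Y.
Proof. by apply: filterS => w ->. Qed.

Lemma ae_eq_ge (X Y : T -> R) : Defs.ae_eq P X Y -> ae_le P Y X.
Proof. by apply: filterS => w ->. Qed.

Lemma ae_le_anti (X Y : T -> R) : ae_le P X Y -> ae_le P Y X -> Defs.ae_eq P X Y.
Proof. by apply: filterS2 => w XY YX; apply/eqP; rewrite eq_le XY YX. Qed.

Lemma ae_le_trans (X Y Z : T -> R) : ae_le P X Y -> ae_le P Y Z -> ae_le P X Z.
Proof. by apply: filterS2 => w; exact: le_trans. Qed.

End AlmostEverywhere.

Lemma ge0_natmul_lbound (R : archiFieldType) (l x : R) :
  (forall n : nat, l <= n%:R * x) -> 0 <= x.
Proof.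
move=> lx; rewrite leNgt; apply/negP => x_lt0.
have Nx_gt0 : 0 < - x by rewrite oppr_gt0.
have := truncnS_gt (`|l| / - x); rewrite ltr_pdivrMr // mulrN ltrNr => lt_l.
have := lx (Num.truncn (`|l| / - x)).+1; rewrite leNgt (lt_le_trans lt_l) //.
by rewrite lerNl -normrN ler_norm.
Qed.

Lemma down_ind (E : nat) (Q : nat -> Prop) :
  Q E -> (forall j, (j < E)%N -> Q j.+1 -> Q j) -> forall j, (j <= E)%N -> Q j.
Proof.
move=> QE QS j jE; rewrite -(subKn jE).
elim: (E - j)%N (leq_subr j E) => [|n IH] nE; first by rewrite subn0.
apply: QS; first lia.
by rewrite subnSK //; apply: IH; exact: ltnW.
Qed.

Section Filtration.
Context (d : measure_display) (T : measurableType d).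
Variable F : nat -> set (set T).
Hypothesis F_filtration : is_filtration F.

Lemma filtration_measurable k : F k `<=` measurable.
Proof. by case: (F_filtration k). Qed.

Lemma filtration_sub j k : (j <= k)%N -> F j `<=` F k.
Proof.
elim: k => [|k IH]; first by rewrite leqn0 => /eqP ->.
rewrite leq_eqVlt => /predU1P[->//|]; rewrite ltnS => /IH jk.
by apply: subset_trans jk _; case: (F_filtration k).
Qed.

Lemma measurable_in_filtration j k A :
  (j <= k)%N -> measurable_in (F j) A -> measurable_in (F k) A.
Proof. by move=> jk; apply: sub_sigma_algebra2; exact: filtration_sub. Qed.

Variables (K : nat) (tau : T -> nat).
Hypothesis tau_stopping : stopping_time F K tau.

Lemma stopping_time_eq_measurable i k :
  (i <= k)%N -> measurable_in (F k) [set w | tau w == i].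
Proof.
move=> ik; have [iK|Ki] := leqP i K.
  rewrite (_ : [set w | tau w == i] = [set w | tau w = i]); last first.
    by apply/seteqP; split => w /= /eqP.
  by apply: measurable_in_filtration ik _; apply: sub_sigma_algebra; exact: tau_stopping.2.
rewrite (_ : [set w | tau w == i] = set0); first exact: measurable0.
apply/seteqP; split => w //= /eqP tau_i; move: (tau_stopping.1 w); rewrite tau_i.
by rewrite leqNgt Ki.
Qed.

Lemma stopping_time_le_measurable l : measurable_in (F l) [set w | (tau w <= l)%N].
Proof.
elim: l => [|l IH].
  under eq_set do rewrite leqn0; exact: stopping_time_eq_measurable.
rewrite (_ : [set w | (tau w <= l.+1)%N] =
             [set w | (tau w <= l)%N] `|` [set w | tau w == l.+1]).
  apply: measurableU; [exact: measurable_in_filtration IH|exact: stopping_time_eq_measurable].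
apply/seteqP; split => w /=; first by rewrite leq_eqVlt ltnS => /orP[->|->]; [right|left].
by case=> [/leqW //|/eqP ->].
Qed.

Lemma stopping_time_gt_measurable l : measurable_in (F l) [set w | (l < tau w)%N].
Proof.
rewrite (_ : [set w | (l < tau w)%N] = ~` [set w | (tau w <= l)%N]).
  by apply: measurableC; exact: stopping_time_le_measurable.
by apply/seteqP; split => w /=; rewrite ltnNge; move/negP.
Qed.

End Filtration.

Lemma sum_indicator_eq (R : pzSemiRingType) (t l : nat) (f : nat -> R) :
  \sum_(0 <= i < l.+1) f i * (t == i)%:R = (t <= l)%N%:R * f t.
Proof.
have [tl|lt] := leqP t l.
  rewrite (bigD1_seq t) ?mem_index_iota ?iota_uniq //= eqxx mulr1 mul1r.
  by rewrite big1 ?addr0 // => i /negbTE; rewrite eq_sym => ->; rewrite mulr0.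
rewrite mul0r big1_seq // => i; rewrite mem_index_iota => /andP[_ il].
by rewrite (_ : t == i = false) ?mulr0 //; apply/negbTE; rewrite neq_ltn (leq_trans il lt) orbT.
Qed.

Section Wealth.
Context (d : measure_display) (T : measurableType d) (R : realType).
Variables (S : nat -> T -> R) (K : nat) (p0 : R) (tau : T -> nat).
Variables (xi : nat -> T -> R) (z : nat -> nat -> T -> R).

Lemma positionE l w : position tau xi z l w =
  xi l w * (l < tau w)%N%:R + (tau w <= l)%N%:R * z (tau w) l w.
Proof. by rewrite /position sum_indicator_eq. Qed.

Lemma wealth_exercised w : (tau w <= K)%N ->
  wealth S K p0 tau xi z w = p0 + \sum_(0 <= l < tau w) xi l w * (S l.+1 w - S l w)
                                + \sum_(tau w <= l < K) z (tau w) l w * (S l.+1 w - S l w).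
Proof.
move=> tauK; rewrite /wealth /gains (@big_cat_nat _ _ _ (tau w) 0 K _ _ (leq0n _) tauK) addrA.
congr (_ + _ + _); apply: eq_big_nat => l /andP[tl lt]; rewrite positionE.
  by rewrite lt leqNgt lt mulr1 mul0r addr0.
by rewrite ltnNge tl mulr0 mul1r add0r.
Qed.

End Wealth.

Lemma payoff_at_stopped d (T : measurableType d) (R : realType) (U : Type)
    (Fp : R -> U -> R) (S : nat -> T -> R) (Y : nat -> T -> U) (K : nat) (tau : T -> nat) :
  (forall w, (tau w <= K)%N) ->
  payoff_at Fp S Y K tau = fun w => Fp (S (tau w) w) (Y (tau w) w).
Proof.
move=> tauK; apply/funext => w; rewrite /payoff_at.
under eq_bigr do rewrite mulrC.
by rewrite sum_indicator_eq tauK mul1r.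
Qed.

Section RhoComposition.
Context (d : measure_display) (T : measurableType d) (R : realType).
Variables (P : probability T R) (p : \bar R).
Hypothesis p_ge1 : (1 <= p)%E.
Variable F : nat -> set (set T).
Hypothesis F_filtration : is_filtration F.
Variables (K : nat) (rk : nat -> (T -> R) -> T -> R).
Hypothesis rk_coherent : forall k, (k < K)%N -> coherent_cond_risk_map P p F k (rk k).

Local Notation Lpk k := (Lp_in P p (F k)).
Local Notation rc := (rho_comp rk).

Lemma rho_compS j E X : (j < E)%N -> rc j E X = rk j (rc j.+1 E X).
Proof. by move=> jE; rewrite /rho_comp -(subnSK jE). Qed.

Lemma rho_comp_id E X : rc E E X = X.
Proof. by rewrite /rho_comp subnn. Qed.

Lemma rho_comp_split j m E X : (j <= m)%N -> (m <= E)%N -> rc j E X = rc j m (rc m E X).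
Proof.
move=> jm mE; rewrite /rho_comp.
have -> : (E - j = (m - j) + (E - m))%N by lia.
by rewrite iotaD foldr_cat subnKC.
Qed.

Lemma Lp_in_filtration j k f : (j <= k)%N -> Lpk j f -> Lpk k f.
Proof. by move=> jk; apply: Lp_in_sub; exact: filtration_sub. Qed.

Lemma rho_comp_Lp j E X : (E <= K)%N -> (j <= E)%N -> Lpk E X -> Lpk j (rc j E X).
Proof.
move=> EK jE LX; move: j jE; apply: down_ind; first by rewrite rho_comp_id.
move=> j jE IH; rewrite rho_compS //.
by have [rkLp _ _ _ _] := rk_coherent (leq_trans jE EK); exact: rkLp.
Qed.

Lemma rk_ae_eq k X Y : (k < K)%N -> Lpk k.+1 X -> Lpk k.+1 Y ->
  Defs.ae_eq P X Y -> Defs.ae_eq P (rk k X) (rk k Y).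
Proof.
move=> kK LX LY XY; have [_ rk_mono _ _ _] := rk_coherent kK.
by apply: ae_le_anti; apply: rk_mono => //; [exact: ae_eq_le|exact: ae_eq_ge].
Qed.

Lemma rho_comp_le j E X Y : (E <= K)%N -> (j <= E)%N -> Lpk E X -> Lpk E Y ->
  ae_le P X Y -> ae_le P (rc j E X) (rc j E Y).
Proof.
move=> EK jE LX LY XY; move: j jE; apply: down_ind; first by rewrite !rho_comp_id.
move=> j jE IH; rewrite !(rho_compS _ jE).
have [_ rk_mono _ _ _] := rk_coherent (leq_trans jE EK).
by apply: rk_mono IH; exact: rho_comp_Lp.
Qed.

Lemma rho_comp_commute j E (phi : (T -> R) -> T -> R) X :
  (E <= K)%N -> (j <= E)%N -> Lpk E X -> Lpk E (phi X) ->
  (forall k Z, (j <= k < E)%N -> Lpk k.+1 Z ->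
     Lpk k.+1 (phi Z) /\ Defs.ae_eq P (rk k (phi Z)) (phi (rk k Z))) ->
  Defs.ae_eq P (rc j E (phi X)) (phi (rc j E X)).
Proof.
move=> EK jE LX LphiX phi_rk.
suff: forall i, (i <= E)%N -> (j <= i)%N -> Defs.ae_eq P (rc i E (phi X)) (phi (rc i E X)).
  by apply.
apply: down_ind => [_|i iE IH ji]; first by rewrite !rho_comp_id; exact: nearW.
have iK := leq_trans iE EK.
have [Lphi_rc rk_phi] := phi_rk i _ (introT andP (conj ji iE)) (rho_comp_Lp EK iE LX).
have rk_IH : Defs.ae_eq P (rk i (rc i.+1 E (phi X))) (rk i (phi (rc i.+1 E X))).
  by apply: rk_ae_eq Lphi_rc _ => //; [exact: rho_comp_Lp|exact/IH/ltnW].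
by rewrite !(rho_compS _ iE); apply: filterS2 rk_IH rk_phi => w ->.
Qed.

Lemma rho_comp_translation j E X m : (E <= K)%N -> (j <= E)%N -> Lpk E X -> Lpk j m ->
  Defs.ae_eq P (rc j E (fun w => X w + m w)) (fun w => rc j E X w + m w).
Proof.
move=> EK jE LX Lm; apply: (rho_comp_commute (phi := fun Z w => Z w + m w)) => //.
  by apply: Lp_inD => //; [exact: filtration_measurable|exact: Lp_in_filtration Lm].
move=> k Z /andP[jk kE] LZ; have [_ _ rk_transl _ _] := rk_coherent (leq_trans kE EK).
split; last exact: rk_transl (Lp_in_filtration jk Lm).
apply: Lp_inD => //; first exact: filtration_measurable.
exact: Lp_in_filtration (leqW jk) Lm.
Qed.

Lemma rho_comp_scale j E X a : (E <= K)%N -> (j <= E)%N -> Lpk E X -> meas_in (F j) a ->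
  (forall w, 0 <= a w) -> (exists M : R, forall w, a w <= M) ->
  Defs.ae_eq P (rc j E (fun w => a w * X w)) (fun w => a w * rc j E X w).
Proof.
move=> EK jE LX ma a_ge0 [M aM].
have aM' w : `|a w| <= M by rewrite ger0_norm.
have ma_at k : (j <= k)%N -> meas_in (F k) a.
  by move=> jk; apply: meas_in_sub ma; exact: filtration_sub.
apply: (rho_comp_commute (phi := fun Z w => a w * Z w)) => //.
  by apply: Lp_in_bddM aM' LX => //; [exact: filtration_measurable|exact: ma_at].
move=> k Z /andP[jk kE] LZ; have [_ _ _ _ rk_scale] := rk_coherent (leq_trans kE EK).
split; last by apply: rk_scale => //; [exact: ma_at|exists M].
by apply: Lp_in_bddM aM' LZ => //; [exact: filtration_measurable|exact: ma_at (leqW jk)].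
Qed.

Lemma rho_comp0 j E : (E <= K)%N -> (j <= E)%N -> Defs.ae_eq P (rc j E (cst 0)) (cst 0).
Proof.
move=> EK jE.
have : Defs.ae_eq P (rc j E (fun w => cst 0 w * cst 0 w))
                    (fun w => cst 0 w * rc j E (cst 0) w).
  by apply: rho_comp_scale => //; [exact: Lp_in_cst|exact: measurable_cst|exists 0].
by rewrite /= mul0r; apply: filterS => w ->; rewrite mul0r.
Qed.

Lemma rho_comp_adapted j E m : (E <= K)%N -> (j <= E)%N -> Lpk j m ->
  Defs.ae_eq P (rc j E m) m.
Proof.
move=> EK jE Lm; have := rho_comp_translation EK jE (Lp_in_cst P p_ge1 (F E) 0) Lm.
rewrite (_ : (fun w => _) = m); last by apply/funext => w /=; rewrite add0r.
by apply: filterS2 (rho_comp0 EK jE) => w /= -> ->; rewrite add0r.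
Qed.

Lemma rho_comp_indicatorM j E (b : T -> bool) X : (E <= K)%N -> (j <= E)%N ->
  measurable_in (F j) [set w | b w] -> Lpk E X ->
  Defs.ae_eq P (rc j E (fun w => (b w)%:R * X w)) (fun w => (b w)%:R * rc j E X w).
Proof.
move=> EK jE mb LX; apply: rho_comp_scale => //; first exact: indicator_meas_in.
by exists 1 => w; case: (b w).
Qed.

Lemma rho_comp_local j E (b : T -> bool) X Y : (E <= K)%N -> (j <= E)%N ->
  measurable_in (F j) [set w | b w] -> Lpk E X -> Lpk E Y ->
  Defs.ae_eq P (rc j E (fun w => if b w then X w else Y w))
               (fun w => if b w then rc j E X w else rc j E Y w).
Proof.
move=> EK jE mb LX LY; set Z := fun w => if b w then X w else Y w.
have mNb : measurable_in (F j) [set w | ~~ b w].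
  rewrite (_ : [set w | ~~ b w] = ~` [set w | b w]); first exact: measurableC.
  by apply/seteqP; split => w /=; move/negP.
have LZ : Lpk E Z.
  rewrite (_ : Z = fun w => (b w)%:R * X w + (~~ b w)%:R * Y w); last first.
    by apply/funext => w; rewrite /Z; case: (b w); rewrite /= ?mul1r ?mul0r ?addr0 ?add0r.
  have FE := filtration_measurable F_filtration (k := E).
  apply: (Lp_inD p_ge1 FE).
    by apply: (Lp_in_indicatorM p_ge1 FE) LX; exact: measurable_in_filtration mb.
  by apply: (Lp_in_indicatorM p_ge1 FE) LY; exact: measurable_in_filtration mNb.
have hZ := rho_comp_indicatorM EK jE mb LZ.
have hNZ := rho_comp_indicatorM EK jE mNb LZ.
have hX := rho_comp_indicatorM EK jE mb LX.
have hY := rho_comp_indicatorM EK jE mNb LY.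
rewrite (_ : (fun w => (b w)%:R * Z w) = fun w => (b w)%:R * X w) in hZ; last first.
  by apply/funext => w; rewrite /Z; case: (b w); rewrite ?mul0r.
rewrite (_ : (fun w => (~~ b w)%:R * Z w) = fun w => (~~ b w)%:R * Y w) in hNZ; last first.
  by apply/funext => w; rewrite /Z; case: (b w); rewrite ?mul0r.
apply: filterS3 hZ hNZ (filterI hX hY) => w /= eZ eNZ [eX eY].
by case: (b w) eZ eNZ eX eY; rewrite /= !(mul1r, mul0r); [move=> <- _ <- _|move=> _ <- _ <-].
Qed.

Lemma admissible_gains_Lp S m eta : admissible_from P p F S m K eta ->
  Lpk K (fun w => - gains S eta m K w).
Proof.
move=> adm; have FK := filtration_measurable F_filtration (k := K).
apply: (Lp_inN p_ge1 FK); apply: (Lp_in_sum p_ge1 FK) => l.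
rewrite mem_index_iota => mlK; have [_ Leta] := adm l mlK.
by apply: Lp_in_filtration Leta; case/andP: mlK.
Qed.

(* Scaling the strategy by [n] scales [G], so bounded market risk bounds [n * rho(G)] from
   below uniformly in [n]. *)
Lemma rho_comp_loss_ge0 S m eta : bounded_cond_market_risk P p F S K rk ->
  (m < K)%N -> admissible_from P p F S m K eta ->
  ae_le P (cst 0) (rc m K (fun w => - gains S eta m K w)).
Proof.
move=> bcmr mK adm; have [L L_le] := bcmr m mK.
set G := fun w => - gains S eta m K w.
have L_le_n (n : nat) : \forall w \ae P, L w <= n%:R * rc m K G w.
  pose eta_n l w := n%:R * eta l w.
  have adm_n : admissible_from P p F S m K eta_n.
    move=> l mlK; have [meta Leta] := adm l mlK.
    split; first exact: measurable_funM (measurable_cst _) meta.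
    under eq_fun do rewrite -mulrA.
    apply: (Lp_in_bddM p_ge1 (filtration_measurable F_filtration (k := l.+1))
              (measurable_cst _) _ Leta) => w.
    by rewrite normr_nat.
  have G_n : (fun w => - gains S eta_n m K w) = fun w => n%:R * G w.
    apply/funext => w; rewrite /G /gains /eta_n mulrN mulr_sumr.
    by congr -%R; apply: eq_bigr => l _; rewrite mulrA.
  have scale_n : Defs.ae_eq P (rc m K (fun w => cst n%:R w * G w)) (fun w => n%:R * rc m K G w).
    apply: rho_comp_scale (ltnW mK) (admissible_gains_Lp adm) _ _ _ => //.
      exact: measurable_cst.
    by exists n%:R.
  by apply: filterS2 (L_le _ adm_n) scale_n => w; rewrite G_n => + <-.
by apply: filterS (ae_foralln L_le_n) => w; exact: ge0_natmul_lbound.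
Qed.

Section PostExerciseHedge.
Variable S : nat -> T -> R.
Hypothesis rk_bounded : bounded_cond_market_risk P p F S K rk.
Variables (tau : T -> nat) (xi : nat -> T -> R) (xih : nat -> nat -> T -> R) (p0 : R).
Hypothesis tau_stopping : stopping_time F K tau.
Hypothesis strategy_admissible : admissible_strategy P p F S K xi xih.
Variable H : nat -> T -> R.
Hypothesis H_Lp : forall k, (k <= K)%N -> Lpk k (H k).

Local Notation dS l w := (S l.+1 w - S l w).

Definition hedge_before (m : nat) : nat -> nat -> T -> R :=
  fun i k w => if (i < m)%N then xih i k w else 0.

Definition hedged_loss (m : nat) : T -> R :=
  fun w => H (tau w) w - wealth S K p0 tau xi (hedge_before m) w.

Definition unhedged_loss_at (m : nat) : T -> R :=
  fun w => H m w - p0 - \sum_(0 <= l < m) xi l w * dS l w.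

Lemma xi_gain_Lp l : (l < K)%N -> Lpk l.+1 (fun w => xi l w * dS l w).
Proof. by move=> lK; have [adm _] := strategy_admissible; have [] := adm l lK. Qed.

Lemma xih_admissible i : (i < K)%N -> admissible_from P p F S i K (xih i).
Proof. by move=> iK; have [_ adm] := strategy_admissible; exact: adm. Qed.

Lemma xih_gain_Lp i l : (i <= l < K)%N -> Lpk l.+1 (fun w => xih i l w * dS l w).
Proof.
case/andP=> il lK; have [_ adm] := strategy_admissible.
by have [] := adm i (leq_ltn_trans il lK) l; rewrite ?il.
Qed.

Lemma stopped_payoff_Lp : Lpk K (fun w => H (tau w) w).
Proof.
have FK := filtration_measurable F_filtration (k := K).
rewrite (_ : (fun w => _) = fun w => \sum_(0 <= k < K.+1) (tau w == k)%:R * H k w).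
  apply: (Lp_in_sum p_ge1 FK) => k; rewrite mem_index_iota ltnS => /andP[_ kK].
  apply: (Lp_in_indicatorM p_ge1 FK).
    exact (stopping_time_eq_measurable F_filtration tau_stopping kK).
  exact: Lp_in_filtration (H_Lp kK).
apply/funext => w; under eq_bigr do rewrite mulrC.
by rewrite sum_indicator_eq tau_stopping.1 mul1r.
Qed.

Lemma wealth_Lp z : (forall i l, (i <= l < K)%N -> Lpk l.+1 (fun w => z i l w * dS l w)) ->
  Lpk K (wealth S K p0 tau xi z).
Proof.
move=> z_Lp; have FK := filtration_measurable F_filtration (k := K).
rewrite (_ : wealth _ _ _ _ _ _ = fun w => p0 + \sum_(0 <= l < K)
    ((l < tau w)%N%:R * (xi l w * dS l w) +
     \sum_(0 <= i < l.+1) (tau w == i)%:R * (z i l w * dS l w))); last first.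
  apply/funext => w; rewrite /wealth /gains; congr (_ + _); apply: eq_bigr => l _.
  rewrite /position mulrDl mulr_suml; congr (_ + _); first by rewrite mulrAC mulrC.
  by apply: eq_bigr => i _; rewrite mulrAC mulrC.
apply: (Lp_inD p_ge1 FK); first exact: Lp_in_cst.
apply: (Lp_in_sum p_ge1 FK) => l; rewrite mem_index_iota => /andP[_ lK].
apply: (Lp_inD p_ge1 FK).
  apply: (Lp_in_indicatorM p_ge1 FK).
    exact (measurable_in_filtration F_filtration (ltnW lK)
             (stopping_time_gt_measurable F_filtration tau_stopping (l := l))).
  exact: Lp_in_filtration lK (xi_gain_Lp lK).
apply: (Lp_in_sum p_ge1 FK) => i; rewrite mem_index_iota ltnS => /andP[_ il].
apply: (Lp_in_indicatorM p_ge1 FK).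
  exact (stopping_time_eq_measurable F_filtration tau_stopping (leq_trans il (ltnW lK))).
by apply: (Lp_in_filtration lK); apply: z_Lp; rewrite il lK.
Qed.

Lemma hedged_loss_Lp m : Lpk K (hedged_loss m).
Proof.
apply: (Lp_inB p_ge1 (filtration_measurable F_filtration (k := K)) stopped_payoff_Lp).
apply: wealth_Lp => i l ilK; rewrite /hedge_before; case: (i < m)%N => /=.
  exact: xih_gain_Lp.
under eq_fun do rewrite mul0r; exact: Lp_in_cst.
Qed.

Lemma unhedged_loss_Lp m : (m <= K)%N -> Lpk m (unhedged_loss_at m).
Proof.
move=> mK; have Fm := filtration_measurable F_filtration (k := m).
apply: (Lp_inB p_ge1 Fm); first by apply: (Lp_inB p_ge1 Fm); [exact: H_Lp|exact: Lp_in_cst].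
apply: (Lp_in_sum p_ge1 Fm) => l; rewrite mem_index_iota => /andP[_ lm].
exact: Lp_in_filtration lm (xi_gain_Lp (leq_trans lm mK)).
Qed.

Lemma hedged_loss_exercised_at m :
  hedged_loss m = fun w => if tau w == m then unhedged_loss_at m w else hedged_loss m w.
Proof.
apply/funext => w; case: eqP => // tau_m.
rewrite /hedged_loss wealth_exercised ?tau_stopping.1 // tau_m /hedge_before ltnn.
rewrite [X in _ + _ + X]big1 => [|l _]; last exact: mul0r.
by rewrite addr0 opprD addrA.
Qed.

Lemma hedged_loss_succ m : hedged_loss m.+1 = fun w =>
  if tau w == m then - gains S (xih m) m K w + unhedged_loss_at m w else hedged_loss m w.
Proof.
apply/funext => w; rewrite /hedged_loss !wealth_exercised ?tau_stopping.1 //.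
case: eqP => [->|/eqP tau_m].
  rewrite /hedge_before ltnSn /unhedged_loss_at /gains; ring.
congr (_ - (_ + _)); apply: eq_bigr => l _; rewrite /hedge_before.
by rewrite ltnS leq_eqVlt (negbTE tau_m).
Qed.

Lemma hedged_loss_step m : (m < K)%N ->
  ae_le P (rc m K (hedged_loss m)) (rc m K (hedged_loss m.+1)).
Proof.
move=> mK; have mK' := ltnW mK; have EK := leqnn K.
have FK := filtration_measurable F_filtration (k := K).
have mb := stopping_time_eq_measurable F_filtration tau_stopping (leqnn m).
have LU := unhedged_loss_Lp mK'; have LUK := Lp_in_filtration mK' LU.
have LG := admissible_gains_Lp (xih_admissible mK).
have rc_loss := rho_comp_local EK mK' mb LUK (hedged_loss_Lp m).
have rc_loss_succ := rho_comp_local EK mK' mb (Lp_inD p_ge1 FK LG LUK) (hedged_loss_Lp m).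
rewrite -hedged_loss_exercised_at in rc_loss; rewrite -hedged_loss_succ in rc_loss_succ.
have U_fixed := rho_comp_adapted EK mK' LU.
have U_transl := rho_comp_translation EK mK' LG LU.
have G_ge0 := rho_comp_loss_ge0 rk_bounded mK (xih_admissible mK).
apply: filterS3 (filterI rc_loss rc_loss_succ) (filterI U_fixed U_transl) G_ge0.
move=> w [/= -> ->] [/= eU eT] /= G0; case: ifP => // _.
by rewrite eU eT lerDr.
Qed.

Lemma hedged_loss_mono : ae_le P (rc 0 K (hedged_loss 0)) (rc 0 K (hedged_loss K)).
Proof.
suff: forall m, (m <= K)%N -> ae_le P (rc 0 K (hedged_loss 0)) (rc 0 K (hedged_loss m)).
  by apply.
elim=> [_|m IH mK]; first exact: nearW.
have mK' := ltnW mK; apply: ae_le_trans (IH mK') _.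
rewrite (rho_comp_split (hedged_loss m) (leq0n m) mK').
rewrite (rho_comp_split (hedged_loss m.+1) (leq0n m) mK').
by apply: (rho_comp_le mK' (leq0n m) _ _ (hedged_loss_step mK));
  apply: rho_comp_Lp (leqnn K) mK' (hedged_loss_Lp _).
Qed.

Lemma rho_no_post_exercise_le rho :
  (forall X, Lpk K X -> Defs.ae_eq P (rho X) (rc 0 K X)) ->
  ae_le P (rho (fun w => H (tau w) w - wealth S K p0 tau xi no_post_exercise w))
          (rho (fun w => H (tau w) w - wealth S K p0 tau xi xih w)).
Proof.
move=> rho_rc.
have -> : (fun w => H (tau w) w - wealth S K p0 tau xi xih w) = hedged_loss K.
  apply/funext => w; rewrite /hedged_loss !wealth_exercised ?tau_stopping.1 //.
  congr (_ - (_ + _)); apply: eq_big_nat => l /andP[tl lK].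
  by rewrite /hedge_before (leq_ltn_trans tl lK).
apply: filterS3 (rho_rc _ (hedged_loss_Lp 0)) (rho_rc _ (hedged_loss_Lp K)) hedged_loss_mono.
by move=> w -> ->.
Qed.

End PostExerciseHedge.

End RhoComposition.

Theorem corollary1 (d : measure_display) (T : measurableType d) (R : realType)
  (P : probability T R) (p : \bar R) (F : nat -> set (set T)) (K : nat)
  (S : nat -> T -> R) (U : Type) (Y : nat -> T -> U) (Fp : R -> U -> R)
  (rhow rhob : (T -> R) -> (T -> R)) :
  (1 <= p)%E ->
  is_filtration F ->
  (forall k, (k <= K)%N -> Lp_in P p (F k) (S k)) ->
  (forall k, (k <= K)%N -> Lp_in P p (F k) (fun w => Fp (S k w) (Y k w))) ->
  (* writer: with or without commitment (the inequality holds for every tau) *)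
  (good_risk_measure P p F S K rhow ->
     forall (p0 : R) (tau : T -> nat) xi xih,
       stopping_time F K tau -> admissible_strategy P p F S K xi xih ->
       ae_le P
         (rhow (fun w => payoff_at Fp S Y K tau w - wealth S K p0 tau xi no_post_exercise w))
         (rhow (fun w => payoff_at Fp S Y K tau w - wealth S K p0 tau xi xih w))) /\
  (* buyer *)
  (good_risk_measure P p F S K rhob ->
     forall (p0 : R) (tau : T -> nat) xi xih,
       stopping_time F K tau -> admissible_strategy P p F S K xi xih ->
       ae_le P
         (rhob (fun w => - payoff_at Fp S Y K tau w - wealth S K p0 tau xi no_post_exercise w))
         (rhob (fun w => - payoff_at Fp S Y K tau w - wealth S K p0 tau xi xih w))).
Proof.
move=> p_ge1 F_filtration _ Fp_Lp.
split=> -[rk [[rk_coherent rho_rc] rk_bounded]] p0 tau xi xih tau_stopping adm;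
  rewrite (payoff_at_stopped _ _ _ tau_stopping.1).
- exact: (rho_no_post_exercise_le p_ge1 F_filtration rk_coherent rk_bounded p0
            tau_stopping adm (H := fun k w => Fp (S k w) (Y k w)) Fp_Lp rho_rc).
- apply: (rho_no_post_exercise_le p_ge1 F_filtration rk_coherent rk_bounded p0
            tau_stopping adm (H := fun k w => - Fp (S k w) (Y k w))) rho_rc => k kK.
  exact (Lp_inN p_ge1 (filtration_measurable F_filtration (k := k)) (Fp_Lp k kK)).
Qed.
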